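(* Let $x=(x_1,\dots,x_n)$ be a stochastic vector ($x_k\ge0$, $\sum_k x_k=1$) and let $y=x_1$. Then \[ \prod_{k=1}^n(1-x_k)^{1-x_k}\ \ge\ \frac{(1-y)^{1-y}}{e^{1-y}}. \]
   Context: Convention: $0^0=1$. *)

From Stdlib Require Import Reals Lra Lia.
Open Scope R_scope.

(* Real power a^b with the convention 0^0 = 1 (and 0^b = 0 for b <> 0);
   for a > 0 it is exp (b * ln a). *)
Definition rpow (a b : R) : R :=
  if Req_EM_T a 0 then (if Req_EM_T b 0 then 1 else 0) else Rpower a b.

Fixpoint rsum (n : nat) (f : nat -> R) : R :=
  match n with O => 0 | S m => rsum m f + f m end.
Fixpoint rprod (n : nat) (f : nat -> R) : R :=
  match n with O => 1 | S m => rprod m f * f m end.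

(* Since t ln t >= t - 1, each factor satisfies (1 - x_k)^(1 - x_k) >= e^(-x_k).
   Keeping the first factor and bounding the others this way, the product is
   at least (1 - y)^(1 - y) e^(-(x_2 + ... + x_n)) = (1 - y)^(1 - y) e^(-(1 - y)). *)
From Stdlib Require Import Reals Lra Lia.
Open Scope R_scope.

Lemma rsum_succ_l (m : nat) (f : nat -> R) :
  rsum (S m) f = f 0%nat + rsum m (fun k => f (S k)).
Proof.
  induction m as [|m IH]; simpl in *; [lra|].
  rewrite IH; lra.
Qed.

Lemma rprod_succ_l (m : nat) (f : nat -> R) :
  rprod (S m) f = f 0%nat * rprod m (fun k => f (S k)).
Proof.
  induction m as [|m IH]; simpl in *; [lra|].
  rewrite IH; lra.
Qed.

Lemma rsum_opp (m : nat) (f : nat -> R) :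
  rsum m (fun k => - f k) = - rsum m f.
Proof. induction m as [|m IH]; simpl; lra. Qed.

Lemma rsum_nonneg (m : nat) (f : nat -> R) :
  (forall k, (k < m)%nat -> 0 <= f k) -> 0 <= rsum m f.
Proof.
  induction m as [|m IH]; intros Hf; simpl; [lra|].
  pose proof (IH (fun k Hk => Hf k ltac:(lia))).
  pose proof (Hf m ltac:(lia)); lra.
Qed.

Lemma term_le_rsum (m k : nat) (f : nat -> R) :
  (forall i, (i < m)%nat -> 0 <= f i) -> (k < m)%nat -> f k <= rsum m f.
Proof.
  induction m as [|m IH]; intros Hf Hk; simpl; [lia|].
  destruct (Nat.eq_dec k m) as [->|Hkm].
  - pose proof (rsum_nonneg m f (fun i Hi => Hf i ltac:(lia))); lra.
  - pose proof (IH (fun i Hi => Hf i ltac:(lia)) ltac:(lia)).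
    pose proof (Hf m ltac:(lia)); lra.
Qed.

Lemma exp_rsum_le_rprod (m : nat) (f g : nat -> R) :
  (forall k, (k < m)%nat -> exp (f k) <= g k) -> exp (rsum m f) <= rprod m g.
Proof.
  induction m as [|m IH]; intros Hfg; simpl.
  - rewrite exp_0; lra.
  - rewrite exp_plus.
    pose proof (IH (fun k Hk => Hfg k ltac:(lia))).
    apply Rmult_le_compat; auto using Rlt_le, exp_pos.
Qed.

Lemma rpow_self_nonneg (t : R) : 0 <= rpow t t.
Proof.
  unfold rpow, Rpower.
  destruct (Req_EM_T t 0); [destruct (Req_EM_T t 0); lra|].
  apply Rlt_le, exp_pos.
Qed.

Lemma exp_pred_le_rpow_self (t : R) : 0 <= t -> exp (t - 1) <= rpow t t.
Proof.
  intros Ht. unfold rpow.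
  destruct (Req_EM_T t 0) as [->|Ht0].
  - destruct (Req_EM_T 0 0) as [_|]; [|lra].
    rewrite <- exp_0 at 2. apply Rlt_le, exp_increasing; lra.
  - assert (Htpos : 0 < t) by lra.
    (* [1 - ln t <= exp (- ln t) = / t], then multiply by [t]. *)
    pose proof (exp_ineq1_le (- ln t)) as Hlog.
    rewrite exp_Ropp, exp_ln in Hlog by exact Htpos.
    assert (Hmul : t * (1 + - ln t) <= t * / t) by (apply Rmult_le_compat_l; lra).
    rewrite Rinv_r in Hmul by lra.
    unfold Rpower.
    destruct (Rle_lt_or_eq_dec (t - 1) (t * ln t)) as [Hlt|Heq]; [nra| |].
    + apply Rlt_le, exp_increasing, Hlt.
    + rewrite Heq; lra.
Qed.

Theorem lemma5p5 (n : nat) (x : nat -> R) (hn : (1 <= n)%nat)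
  (hnn : forall k, (k < n)%nat -> 0 <= x k)
  (hsum : rsum n x = 1) :
  rprod n (fun k => rpow (1 - x k) (1 - x k))
    >= rpow (1 - x 0%nat) (1 - x 0%nat) / exp (1 - x 0%nat).
Proof.
  destruct n as [|m]; [lia|].
  assert (Hle1 : forall k, (k < S m)%nat -> x k <= 1).
  { intros k Hk. rewrite <- hsum. exact (term_le_rsum (S m) k x hnn Hk). }
  assert (Htail : exp (rsum m (fun k => - x (S k)))
                  <= rprod m (fun k => rpow (1 - x (S k)) (1 - x (S k)))).
  { apply exp_rsum_le_rprod. intros k Hk.
    replace (- x (S k)) with ((1 - x (S k)) - 1) by lra.
    apply exp_pred_le_rpow_self.
    pose proof (Hle1 (S k) ltac:(lia)); lra. }
  rewrite rsum_opp in Htail.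
  rewrite rsum_succ_l in hsum.
  replace (- rsum m (fun k => x (S k))) with (- (1 - x 0%nat)) in Htail by lra.
  rewrite rprod_succ_l. unfold Rdiv. rewrite <- exp_Ropp.
  apply Rle_ge, Rmult_le_compat_l; [apply rpow_self_nonneg | exact Htail].
Qed.
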